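(* Let $\mathcal{P}$ be a grid polyomino with holes $\mathcal{H}_{ij}=[a_{ij},b_{ij}]$, $i\in[r]$, $j\in[s]$, and toric ideal $J_{\mathcal{P}}$. Let $f=f^+-f^-\in J_{\mathcal{P}}$ be a binomial, $V_+=\{v\in V(\mathcal{P}): x_v\mid f^+\}$, $V_-=\{v\in V(\mathcal{P}): x_v\mid f^-\}$. If $v\in V_+\cap\mathcal{L}_{i,j}$ for some $i\in[r]$, $j\in[s]$, then there exists $v'\in V_-\cap\mathcal{L}_{i,j}$.
   Context: A cell is $[a,a+(1,1)]$, $a\in\mathbb{N}^2$, with vertices $a,a+(1,0),a+(0,1),a+(1,1)$; a polyomino is a finite nonempty set of cells, any two joined by a sequence of cells in it with consecutive ones sharing an edge; $V(\mathcal{P})$ is the set of vertices of its cells; $S=\mathbb{K}[x_v\mid v\in V(\mathcal{P})]$, $\mathbb{K}$ a field. For $a=(a_1,a_2)\le b=(b_1,b_2)$ componentwise, $[a,b]=\{(p,q): a_1\le p\le b_1, a_2\le q\le b_2\}$. Grid polyomino: let $m,n\ge1$, $r,s\ge1$, and for $i\in[r]$, $j\in[s]$ let $a_{ij},b_{ij}\in\mathbb{N}^2$ with $1<(a_{ij})_1<(b_{ij})_1<m$, $1<(a_{ij})_2<(b_{ij})_2<n$, such that (1) for each $i$, $(a_{i\ell})_1=(a_{ik})_1$ and $(b_{i\ell})_1=(b_{ik})_1$ for all $\ell,k\in[s]$; (2) for each $j$, $(a_{\ell j})_2=(a_{kj})_2$ and $(b_{\ell j})_2=(b_{kj})_2$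 for all $\ell,k\in[r]$; (3) $(a_{i+1,j})_1=(b_{ij})_1+1$ for $i\in[r-1]$ and $(a_{i,j+1})_2=(b_{ij})_2+1$ for $j\in[s-1]$. The grid polyomino $\mathcal{P}$ is the set of cells of $[(1,1),(m,n)]$ not contained in any $\mathcal{H}_{ij}=[a_{ij},b_{ij}]$; the holes of $\mathcal{P}$ are the sets of cells of the $\mathcal{H}_{ij}$, with lower left corner $a_{ij}$. Toric ideal: set $\mathcal{F}_{i,j}=\{(x,y)\in V(\mathcal{P}): x\le (a_{ij})_1,\ y\le (a_{ij})_2\}$. A horizontal edge interval is a set $\{(t,y):p\le t\le q\}$ with each $\{(t,y),(t+1,y)\}$, $p\le t<q$, an edge of a cell of $\mathcal{P}$; maximal if not strictly contained in another; vertical analogously. Each $a\in V(\mathcal{P})$ lies in a unique maximal horizontal edge interval $H(a)$ and maximal vertical one $V(a)$. With variables $h_H,v_V$ for maximal edge intervals and $w_{i,j}$, define $\varphi(x_a)=h_{H(a)}v_{V(a)}\prod_{(i,j):a\in\mathcal{F}_{i,j}}w_{i,j}$; $J_{\mathcal{P}}=\ker\varphi$. Finally $\mathcal{L}_{i,j}=\mathcal{F}_{i,j}\setminus\bigcup\{\mathcal{F}_{k,h}: k\le i,\ h\le j,\ (k,h)\ne(i,j)\}$. *)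

From HB Require Import structures.
From mathcomp Require Import all_boot all_order all_algebra.
From mathcomp Require Import mpoly.
Set Implicit Arguments. Unset Strict Implicit. Unset Printing Implicit Defensive.
Import GRing.Theory.
Local Open Scope ring_scope.

(* Points of N^2 are pairs of nats; a cell is identified by its lower-left
   corner c, i.e. the cell [c, c+(1,1)]. *)

Section Grid.
Variables (m n r s : nat) (a b : 'I_r -> 'I_s -> nat * nat).

(* Grid polyomino hypotheses (coordinates with 1-based [r],[s] replaced by
   0-based ordinals 'I_r, 'I_s). *)
Definition grid_hyp : Prop :=
  [/\ (1 <= m)%N, (1 <= n)%N, (1 <= r)%N & (1 <= s)%N] /\
  (forall i j, 1 < (a i j).1 < (b i j).1 /\ (b i j).1 < m)%N /\
  (forall i j, 1 < (a i j).2 < (b i j).2 /\ (b i j).2 < n)%N /\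
  (forall i l k, (a i l).1 = (a i k).1 /\ (b i l).1 = (b i k).1) /\
  (forall j l k, (a l j).2 = (a k j).2 /\ (b l j).2 = (b k j).2) /\
  (forall (i i' : 'I_r) j, val i' = (val i).+1 -> (a i' j).1 = ((b i j).1).+1) /\
  (forall i (j j' : 'I_s), val j' = (val j).+1 -> (a i j').2 = ((b i j).2).+1).

Definition cell_in (c p q : nat * nat) : bool :=
  [&& (p.1 <= c.1)%N, (c.1.+1 <= q.1)%N, (p.2 <= c.2)%N & (c.2.+1 <= q.2)%N].

Definition inP (c : nat * nat) : bool :=
  cell_in c (1, 1)%N (m, n) && ~~ [exists i, exists j, cell_in c (a i j) (b i j)].

Definition inV (v : nat * nat) : bool :=
  [|| inP v,
      (0 < v.1)%N && inP (v.1.-1, v.2),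
      (0 < v.2)%N && inP (v.1, v.2.-1) |
      [&& (0 < v.1)%N, (0 < v.2)%N & inP (v.1.-1, v.2.-1)]].

(* {(t,y),(t+1,y)} is an edge of a cell of P *)
Definition hedge (t y : nat) : bool :=
  inP (t, y) || ((0 < y)%N && inP (t, y.-1)).
(* {(x,t),(x,t+1)} is an edge of a cell of P *)
Definition vedge (x t : nat) : bool :=
  inP (x, t) || ((0 < x)%N && inP (x.-1, t)).

(* All vertices of P lie in [0,m] x [0,n]. *)
Definition VT := ('I_m.+1 * 'I_n.+1)%type.
Definition pt (v : VT) : nat * nat := (val v.1, val v.2).

(* H(v): the maximal horizontal edge interval containing v, i.e. the set of
   points (t, v_2) such that every {(t',v_2),(t'+1,v_2)} between t and v_1 is an
   edge of a cell of P. *)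
Definition Hint (v : VT) : {set VT} :=
  [set u : VT | (val u.2 == val v.2) &&
     [forall t : 'I_m.+1, ((minn (val u.1) (val v.1) <= t)%N &&
                           (t < maxn (val u.1) (val v.1))%N) ==> hedge t (val v.2)]].
(* V(v): the maximal vertical edge interval containing v. *)
Definition Vint (v : VT) : {set VT} :=
  [set u : VT | (val u.1 == val v.1) &&
     [forall t : 'I_n.+1, ((minn (val u.2) (val v.2) <= t)%N &&
                           (t < maxn (val u.2) (val v.2))%N) ==> vedge (val v.1) t]].

Definition inF (i : 'I_r) (j : 'I_s) (v : nat * nat) : bool :=
  [&& inV v, (v.1 <= (a i j).1)%N & (v.2 <= (a i j).2)%N].

Definition inL (i : 'I_r) (j : 'I_s) (v : nat * nat) : bool :=
  inF i j v &&
  ~~ [exists k : 'I_r, exists h : 'I_s,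
        [&& (k <= i)%N, (h <= j)%N, ((k, h) != (i, j)) & inF k h v]].

(* Target variables: h_H and v_V indexed by sets of points (only the maximal
   edge intervals are actually used), and w_{i,j}. *)
Definition TT := (({set VT} + {set VT}) + ('I_r * 'I_s))%type.

Definition hvar (K : fieldType) (H : {set VT}) : {mpoly K[#|{: TT}|]} :=
  'X_(enum_rank (inl (inl H) : TT)).
Definition vvar (K : fieldType) (V : {set VT}) : {mpoly K[#|{: TT}|]} :=
  'X_(enum_rank (inl (inr V) : TT)).
Definition wvar (K : fieldType) (i : 'I_r) (j : 'I_s) : {mpoly K[#|{: TT}|]} :=
  'X_(enum_rank (inr (i, j) : TT)).

(* The ring S: polynomials in variables x_v, v in [0,m] x [0,n]; the
   polynomials of K[x_v | v in V(P)] are those involving only v with inV. *)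
Definition Sring (K : fieldType) := {mpoly K[#|{: VT}|]}.

Definition xvar (K : fieldType) (v : VT) : Sring K := 'X_(enum_rank v).

Definition phi_var (K : fieldType) (k : 'I_#|{: VT}|) : {mpoly K[#|{: TT}|]} :=
  let v := enum_val k in
  hvar K (Hint v) * vvar K (Vint v) *
  \prod_(ij : 'I_r * 'I_s | inF ij.1 ij.2 (pt v)) wvar K ij.1 ij.2.

Definition phi (K : fieldType) (f : Sring K) : {mpoly K[#|{: TT}|]} :=
  mmap (@mpolyC _ K) (@phi_var K) f.

(* J_P = ker phi (restricted to polynomials in the variables x_v, v \in V(P)) *)
Definition in_JP (K : fieldType) (f : Sring K) : Prop :=
  (forall mu, mu \in msupp f -> forall v : VT, (0 < mu (enum_rank v))%N -> inV (pt v))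
  /\ phi f = 0.

End Grid.

(* [phi] sends [x_v] to a monomial whose [w_{k,h}]-exponent is 1 if [v \in F_{k,h}] and 0
   otherwise, so [phi f^+ = phi f^-] says that [f^+] and [f^-] have the same number of
   variables, counted with multiplicity, in every [F_{k,h}]: each [F_{k,h}] is "balanced".
   By the grid conditions the corners [a_{k,h}] increase with [k] and [h], hence [F_{k,h}]
   grows with [(k,h)] and [F_{k,j} \cap F_{i,h} \subseteq F_{k,h}].  So
   [L_{i,j} = F_{i,j} \ (F_{i-1,j} \cup F_{i,j-1})] with
   [F_{i-1,j} \cap F_{i,j-1} = F_{i-1,j-1}], and inclusion-exclusion makes [L_{i,j}]
   balanced as well: a variable of [f^+] in [L_{i,j}] forces one of [f^-]. *)

From HB Require Import structures.
From mathcomp Require Import all_boot all_order all_algebra.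
From mathcomp Require Import mpoly.
From mathcomp Require Import zify.
Set Implicit Arguments. Unset Strict Implicit. Unset Printing Implicit Defensive.
Import GRing.Theory.

Lemma mmap_monomial_binomial_eq0 (R : nzRingType) (n p : nat)
    (h : 'I_n -> {mpoly R[p]}) (e : 'I_n -> 'X_{1..p}) (mu nu : 'X_{1..n}) :
  (forall k, h k = 'X_[e k]) ->
  mmap (@mpolyC p R) h ('X_[mu] - 'X_[nu])%R = 0%R ->
  (\sum_(k < n) e k *+ mu k = \sum_(k < n) e k *+ nu k)%MM.
Proof.
move=> he; rewrite mmapB !mmapX /mmap1.
under eq_bigr do rewrite he; under [X in (_ - X)%R]eq_bigr do rewrite he.
rewrite !mprodXnE => /eqP; rewrite subr_eq0 => /eqP /(congr1 (@msupp p R)).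
by rewrite !msuppX => -[].
Qed.

Section Balanced.
Variables (V : finType) (p q : V -> nat).

Definition balanced (Q : pred V) : Prop :=
  \sum_(v | Q v) p v = \sum_(v | Q v) q v.

Lemma eq_balanced (Q1 Q2 : pred V) : Q1 =1 Q2 -> balanced Q1 -> balanced Q2.
Proof. by move=> eQ; rewrite /balanced !(eq_bigl _ _ eQ). Qed.

Lemma balanced_pred0 : balanced pred0.
Proof. by rewrite /balanced !big_pred0. Qed.

Lemma balancedD (Q1 Q2 : pred V) : subpred Q1 Q2 ->
  balanced Q1 -> balanced Q2 -> balanced (predD Q2 Q1).
Proof.
move=> sQ bQ1; rewrite /balanced !(bigID Q1 Q2) /=.
have eQ1 : [pred v | Q2 v && Q1 v] =1 Q1.
  by move=> v /=; apply/andP/idP => [[]|Q1v] //; rewrite sQ.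
rewrite !(eq_bigl _ _ eQ1) bQ1 => /addnI eD.
by apply: etrans (etrans eD _); apply: eq_bigl => v; rewrite /= andbC.
Qed.

Lemma balancedU (Q1 Q2 : pred V) :
  balanced Q1 -> balanced Q2 -> balanced (predI Q1 Q2) -> balanced (predU Q1 Q2).
Proof.
move=> bQ1 bQ2 bQ12.
have bD : balanced (predD Q2 (predI Q2 Q1)).
  apply: balancedD bQ2 => [v /andP[] //|].
  by apply: eq_balanced bQ12 => v; rewrite /= andbC.
have e1 v : (Q1 v || Q2 v) && Q1 v = Q1 v by rewrite andbC; case: (Q1 v).
have e2 v : (Q1 v || Q2 v) && ~~ Q1 v = predD Q2 (predI Q2 Q1) v.
  by rewrite /=; case: (Q1 v); case: (Q2 v).
rewrite /balanced !(bigID Q1 (predU Q1 Q2)) /=.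
by rewrite !(eq_bigl _ _ e1) !(eq_bigl _ _ e2) bQ1 bD.
Qed.

Lemma balanced_witness (Q : pred V) (v : V) :
  balanced Q -> Q v -> 0 < p v -> exists2 u, Q u & 0 < q u.
Proof.
move=> bQ Qv pv.
have : 0 < \sum_(u | Q u) q u.
  by rewrite -bQ (bigD1 v) //= (leq_trans pv) ?leq_addr.
rewrite lt0n sum_nat_eq0 => /forallPn[u]; rewrite negb_imply -lt0n => /andP[].
by exists u.
Qed.

Lemma balanced_exists_lt (k : nat) (P : 'I_k -> pred V) (i : 'I_k) :
  (forall l l' : 'I_k, l <= l' -> subpred (P l) (P l')) ->
  (forall l, balanced (P l)) ->
  balanced [pred v | [exists l : 'I_k, (l < i) && P l v]].
Proof.
move=> Pmono bP; case: (posnP i) => [i0 | ipos].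
  apply: eq_balanced balanced_pred0 => v /=.
  by apply/esym/negbTE/existsPn => l; rewrite i0.
have ilt : i.-1 < k by rewrite prednK // ltnW.
apply: eq_balanced (bP (Ordinal ilt)) => v /=; apply/idP/existsP => [Pv | [l /andP[li]]].
  by exists (Ordinal ilt); rewrite /= Pv prednK ?leqnn.
by apply: Pmono; rewrite /= -ltnS prednK.
Qed.

End Balanced.

Lemma ord_homo_leq (k : nat) (f : 'I_k -> nat) :
  (forall l l' : 'I_k, val l' = (val l).+1 -> f l <= f l') ->
  {homo f : l l' / l <= l'}.
Proof.
move=> fS l l'.
pose g x := if insub x is Some l then f l else 0.
have gE (l0 : 'I_k) : f l0 = g l0 by rewrite /g valK.
rewrite !gE; apply: (@homo_leq_in _ [pred x | x < k] g leq) => //=.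
- exact: leq_trans.
- by move=> x y _ yk z /andP[_ zy]; rewrite inE (ltn_trans zy).
- by move=> x xk x1k; have := fS (Ordinal xk) (Ordinal x1k) erefl; rewrite !gE.
- exact: ltn_ord.
- exact: ltn_ord.
Qed.

Section PhiMonomial.
Variables (K : fieldType) (m n r s : nat) (a b : 'I_r -> 'I_s -> nat * nat).

Definition phi_exp (v : VT m n) : 'X_{1..#|{: TT m n r s}|} :=
  (U_(enum_rank (inl (inl (Hint a b v)) : TT m n r s)) +
   U_(enum_rank (inl (inr (Vint a b v)) : TT m n r s)) +
   \sum_(ij : 'I_r * 'I_s | inF m n a b ij.1 ij.2 (pt v))
      U_(enum_rank (inr ij : TT m n r s)))%MM.

Lemma phi_varE k : @phi_var m n r s a b K k = 'X_[phi_exp (enum_val k)].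
Proof.
rewrite /phi_var /phi_exp /hvar /vvar /wvar !mpolyXD -mprodXE.
by congr (_ * _)%R; apply: eq_bigr => -[].
Qed.

Lemma phi_exp_wvar v i j :
  phi_exp v (enum_rank (inr (i, j) : TT m n r s)) = inF m n a b i j (pt v).
Proof.
rewrite /phi_exp !mnmDE !mnm1E !(inj_eq enum_rank_inj) /= mnm_sumE.
under eq_bigr do rewrite mnm1E (inj_eq enum_rank_inj) /=.
rewrite big_mkcond (bigD1 (i, j)) //= eqxx big1 => [|x ne]; last first.
  by case: ifP => // _; case: eqP => // -[ex]; rewrite ex eqxx in ne.
by case: (inF _ _ _ _ _ _ _).
Qed.

Lemma in_JP_balanced_inF (fp fm : 'X_{1..#|{: VT m n}|}) :
  @in_JP m n r s a b K ('X_[fp] - 'X_[fm])%R ->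
  forall i j, balanced (fun v => fp (enum_rank v)) (fun v => fm (enum_rank v))
                       [pred v | inF m n a b i j (pt v)].
Proof.
move=> [_ /(mmap_monomial_binomial_eq0 phi_varE) E] i j.
pose w_ij := enum_rank (inr (i, j) : TT m n r s).
move/(congr1 (fun mu : 'X_{1..#|{: TT m n r s}|} => mu w_ij)): E.
rewrite !mnm_sumE; under eq_bigr do rewrite mulmnE phi_exp_wvar.
under [in X in _ = X -> _]eq_bigr do rewrite mulmnE phi_exp_wvar.
have weightE (mu : 'X_{1..#|{: VT m n}|}) :
    \sum_(v | inF m n a b i j (pt v)) mu (enum_rank v)
  = \sum_k inF m n a b i j (pt (enum_val k)) * mu k.
  rewrite (reindex _ (onW_bij _ (enum_val_bij _))) big_mkcond /=.
  by apply: eq_bigr => k _; rewrite enum_valK; case: (inF _ _ _ _ _ _ _); rewrite ?mul1n.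
by rewrite /balanced !weightE.
Qed.

End PhiMonomial.

Section GridPolyomino.
Variables (m n r s : nat) (a b : 'I_r -> 'I_s -> nat * nat).
Hypothesis grid : grid_hyp m n a b.

Local Notation inF := (inF m n a b).

Lemma hole_corner1_homo (h : 'I_s) : {homo (fun k => (a k h).1) : k k' / k <= k'}.
Proof.
case: grid => _ [corners [_ [_ [_ [next _]]]]].
apply: ord_homo_leq => k k' /next ->; have [/andP[_ ab] _] := corners k h; lia.
Qed.

Lemma hole_corner2_homo (k : 'I_r) : {homo (fun h => (a k h).2) : h h' / h <= h'}.
Proof.
case: grid => _ [_ [corners [_ [_ [_ next]]]]].
apply: ord_homo_leq => h h' /next ->; have [/andP[_ ab] _] := corners k h; lia.
Qed.

Lemma inF_homo (k k' : 'I_r) (h h' : 'I_s) x :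
  k <= k' -> h <= h' -> inF k h x -> inF k' h' x.
Proof.
case: grid => _ [_ [_ [col [row _]]]] kk' hh' /and3P[Vx x1 x2].
have := hole_corner1_homo h' kk'; have := hole_corner2_homo k hh'.
have [e1 _] := col k h h'; have [e2 _] := row h' k k'.
by move=> /= le2 le1; apply/and3P; split => //; lia.
Qed.

Lemma inF_meet (k i : 'I_r) (h j : 'I_s) x :
  inF k j x -> inF i h x -> inF k h x.
Proof.
case: grid => _ [_ [_ [col [row _]]]] /and3P[Vx x1 _] /and3P[_ _ x2].
have [e1 _] := col k h j; have [e2 _] := row h k i.
by apply/and3P; split => //; lia.
Qed.

Variables (i : 'I_r) (j : 'I_s).

Definition inF_left x := [exists k : 'I_r, (k < i) && inF k j x].
Definition inF_below x := [exists h : 'I_s, (h < j) && inF i h x].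

Lemma inF_left_below x :
  inF_left x && inF_below x
  = [exists k : 'I_r, (k < i) && [exists h : 'I_s, (h < j) && inF k h x]].
Proof.
apply/andP/existsP => [[/existsP[k /andP[ki Fk]] /existsP[h /andP[hj Fh]]] | [k /andP[ki]]].
  by exists k; rewrite ki; apply/existsP; exists h; rewrite hj (inF_meet Fk Fh).
case/existsP => h /andP[hj Fkh]; split; apply/existsP.
  by exists k; rewrite ki (inF_homo _ (ltnW hj) Fkh).
by exists h; rewrite hj (inF_homo (ltnW ki) _ Fkh).
Qed.

Lemma inL_split x : inL m n a b i j x = inF i j x && ~~ (inF_left x || inF_below x).
Proof.
rewrite /inL; case Fx: (inF i j x) => //=; congr negb; apply/existsP/orP.
  case=> k /existsP[h /and4P[ki hj ne Fkh]]; case: (ltnP k i) => [lt | ge].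
    by left; apply/existsP; exists k; rewrite lt (inF_homo _ hj Fkh).
  have ek : k = i by apply/val_inj/eqP; rewrite eqn_leq ki ge.
  move: ne Fkh; rewrite ek xpair_eqE eqxx /= => ne Fih.
  by right; apply/existsP; exists h; rewrite Fih andbT ltn_neqAle hj andbT.
case=> [/existsP[k /andP[ki Fk]] | /existsP[h /andP[hj Fh]]].
  exists k; apply/existsP; exists j; rewrite (ltnW ki) leqnn Fk xpair_eqE andbT /=.
  by rewrite eqxx andbT; apply: contraTN ki => /eqP ->; rewrite ltnn.
exists i; apply/existsP; exists h; rewrite leqnn (ltnW hj) Fh xpair_eqE eqxx andbT /=.
by apply: contraTN hj => /eqP ->; rewrite ltnn.
Qed.

Variables (p q : VT m n -> nat).
Hypothesis balanced_inF : forall k h, balanced p q [pred v | inF k h (pt v)].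

Lemma balanced_inL : balanced p q [pred v | inL m n a b i j (pt v)].
Proof.
have bF_left : balanced p q [pred v | inF_left (pt v)].
  apply: (balanced_exists_lt (P := fun k => [pred v | inF k j (pt v)])) => // k k' kk' v.
  exact: inF_homo.
have bF_below : balanced p q [pred v | inF_below (pt v)].
  apply: (balanced_exists_lt (P := fun h => [pred v | inF i h (pt v)])) => // h h' hh' v.
  exact: inF_homo.
have bF_corner : balanced p q
    [pred v | [exists k : 'I_r, (k < i) && [exists h : 'I_s, (h < j) && inF k h (pt v)]]].
  apply: (balanced_exists_lt
            (P := fun k => [pred v | [exists h : 'I_s, (h < j) && inF k h (pt v)]])).
    move=> k k' kk' v /existsP[h /andP[hj Fkh]].
    by apply/existsP; exists h; rewrite hj (inF_homo kk' _ Fkh).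
  move=> k; apply: (balanced_exists_lt (P := fun h => [pred v | inF k h (pt v)])) => //.
  by move=> h h' hh' v; apply: inF_homo.
have bU := balancedU bF_left bF_below
  (eq_balanced (fun v => esym (inF_left_below (pt v))) bF_corner).
apply: eq_balanced (balancedD _ bU (balanced_inF i j)) => [v | v].
  by rewrite /= inL_split andbC.
case/orP => [/existsP[k /andP[ki Fk]] | /existsP[h /andP[hj Fh]]].
  exact: inF_homo (ltnW ki) _ Fk.
exact: inF_homo _ (ltnW hj) Fh.
Qed.

End GridPolyomino.

Local Open Scope ring_scope.

Theorem lemma4p3 (K : fieldType) (m n r s : nat) (a b : 'I_r -> 'I_s -> nat * nat)
  (Hgrid : grid_hyp m n a b)
  (fp fm : 'X_{1..#|{: VT m n}|})
  (Hsupp : forall v : VT m n,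
      ((0 < fp (enum_rank v))%N || (0 < fm (enum_rank v))%N) -> inV m n a b (pt v))
  (Hf : @in_JP m n r s a b K ('X_[fp] - 'X_[fm] : Sring m n K))
  (v : VT m n) (i : 'I_r) (j : 'I_s) :
  (0 < fp (enum_rank v))%N -> inL m n a b i j (pt v) ->
  exists v' : VT m n, (0 < fm (enum_rank v'))%N /\ inL m n a b i j (pt v').
Proof.
move=> fp_v Lv.
have bL := balanced_inL Hgrid i j (in_JP_balanced_inF Hf).
have [v' Lv' fm_v'] := balanced_witness bL Lv fp_v.
by exists v'.
Qed.
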